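(* Let $d \ge 1$, let $r^{(1)},\dots,r^{(\rho)} \in (0,1)^d$ be pairwise incomparable points such that for each $j$ the values $r^{(i)}_j$ are distinct, let $S$ be their record-setting region and $G$ its set of generators. Let $r \in S \cap (0,1)^d$ be such that, for each $j \in [d]$, $r_j \ne r^{(i)}_j$ for all $i \in [\rho]$. Let $S' := S \setminus O^-_r = \{x \in S : x \not\prec r\}$. Define $\Sigma := \{g \in G : g \not\prec r\}$, $N := G \setminus \Sigma = \{g \in G: g \prec r\}$, $\widehat N := \{ y \vee (r_k e^{(k)}) : y \in N, k \in [d]\}$, and let $N'$ be the set of minimal elements of $\widehat N$ with respect to $\le$. Then $\Sigma \cap N' = \emptyset$ and the set of minimal elements of $S'$ with respect to $\le$ is exactly $\Sigma \cup N'$.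
   Context: For $x,y \in \mathbb{R}^d$, $x \prec y$ means $x_j < y_j$ for all $j$, and $x \le y$ means $x_j \le y_j$ for all $j$. The record-setting region of points $r^{(1)},\dots,r^{(\rho)}$ is $S := \{x \in [0,1)^d : x \not\prec r^{(i)} \text{ for all } i\}$; its generators are its minimal elements with respect to $\le$. $O^-_r := \{y \in [0,1)^d : y \prec r\}$. $x \vee y$ denotes the coordinatewise maximum, and $e^{(k)}$ is the $k$-th standard basis vector of $\mathbb{R}^d$. *)

(* points of R^d are functions 'I_d -> R over an arbitrary
   real field R (the statement is purely order-theoretic). *)
From HB Require Import structures.
From mathcomp Require Import all_boot all_order all_algebra.
Set Implicit Arguments. Unset Strict Implicit. Unset Printing Implicit Defensive.
Import Order.TTheory GRing.Theory Num.Theory.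
Local Open Scope ring_scope.

Section Defs.
Variables (R : realFieldType) (d : nat).

Definition vec := 'I_d -> R.

Definition sprec (x y : vec) : Prop := forall j, x j < y j.
Definition vle (x y : vec) : Prop := forall j, x j <= y j.

Definition in_cube (x : vec) : Prop := forall j, 0 <= x j /\ x j < 1.
Definition in_open_cube (x : vec) : Prop := forall j, 0 < x j /\ x j < 1.

Definition record_region (rho : nat) (pts : 'I_rho -> vec) (x : vec) : Prop :=
  in_cube x /\ forall i, ~ sprec x (pts i).

Definition minimal (A : vec -> Prop) (x : vec) : Prop :=
  A x /\ forall y, A y -> vle y x -> y = x.

Definition generators (rho : nat) (pts : 'I_rho -> vec) : vec -> Prop :=
  minimal (record_region pts).

Definition Ominus (r : vec) (y : vec) : Prop := in_cube y /\ sprec y r.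

Definition vjoin (x y : vec) : vec := fun j => Num.max (x j) (y j).

Definition scaled_basis (c : R) (k : 'I_d) : vec :=
  fun j => if j == k then c else 0.

End Defs.

(* The proof pushes every coordinate of x down to the largest
   value pts i j below it (or to 0), which stays in S and lands on a finite
   grid; on grid points the number of pairs (i, j) with pts i j <= x j
   strictly decreases along strict descents, giving a well-founded induction.
   As a by-product every coordinate of a generator is 0 or some pts i j. *)
From HB Require Import structures.
From mathcomp Require Import all_boot all_order all_algebra.
From Stdlib Require Import Classical FunctionalExtensionality.
Set Implicit Arguments. Unset Strict Implicit. Unset Printing Implicit Defensive.
Import Order.TTheory GRing.Theory Num.Theory.
Local Open Scope ring_scope.

Section VectorOrder.
Variables (R : realFieldType) (d : nat).
Implicit Types x y z : vec R d.

Lemma vle_trans x y z : vle x y -> vle y z -> vle x z.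
Proof. by move=> hxy hyz j; apply: le_trans (hxy j) (hyz j). Qed.

Lemma vle_anti x y : vle x y -> vle y x -> x = y.
Proof.
by move=> hxy hyx; apply: functional_extensionality => j; apply: le_anti; rewrite hxy hyx.
Qed.

Lemma not_sprec_witness x y : ~ sprec x y -> exists j, y j <= x j.
Proof.
move=> hxy; apply: NNPP => hnone; apply: hxy => j.
by rewrite ltNge; apply/negP => hj; apply: hnone; exists j.
Qed.

Lemma vle_neq_witness x y : vle x y -> x <> y -> exists j, x j < y j.
Proof.
move=> hxy hneq; apply: NNPP => hnone; apply: hneq; apply: vle_anti => // j.
by rewrite leNgt; apply/negP => hj; apply: hnone; exists j.
Qed.

Lemma not_minimal_witness (A : vec R d -> Prop) x : A x -> ~ minimal A x ->
  exists2 z, A z /\ vle z x & exists j, z j < x j.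
Proof.
move=> hAx hmin; apply: NNPP => hnone; apply: hmin; split=> // z hAz hzx.
apply: NNPP => hneq; apply: hnone; exists z => //; exact: vle_neq_witness.
Qed.

End VectorOrder.

Section GeneratorsBelow.
Variables (R : realFieldType) (d rho : nat) (pts : 'I_rho -> vec R d).
Implicit Types x y z : vec R d.

Lemma record_region_up y z :
  record_region pts y -> vle y z -> in_cube z -> record_region pts z.
Proof.
move=> [_ hy] hyz hz; split=> // i hzi; apply: (hy i) => j.
exact: le_lt_trans (hyz j) (hzi j).
Qed.

Definition on_grid x := forall j, x j = 0 \/ exists i, x j = pts i j.

Definition grid_floor y : vec R d :=
  fun j => \big[Num.max/0]_(i < rho | pts i j <= y j) pts i j.

Lemma le_bigmax_seq (s : seq 'I_rho) (P : pred 'I_rho) (F : 'I_rho -> R) i0 :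
  i0 \in s -> P i0 -> F i0 <= \big[Num.max/0]_(i <- s | P i) F i.
Proof.
elim: s => [|i s IH] //; rewrite in_cons big_cons => /orP [/eqP <- ->|hs hP].
  by rewrite le_max lexx.
by case: ifP => _; rewrite ?le_max IH ?orbT.
Qed.

Lemma bigmax_seq_ge0 (s : seq 'I_rho) (P : pred 'I_rho) (F : 'I_rho -> R) :
  0 <= \big[Num.max/0]_(i <- s | P i) F i.
Proof. by elim: s => [|i s IH]; rewrite ?big_nil // big_cons; case: ifP; rewrite ?le_max ?IH ?orbT. Qed.

Lemma grid_floor_on_grid y : on_grid (grid_floor y).
Proof.
move=> j; apply: (big_ind (fun v => v = 0 \/ exists i, v = pts i j)).
- by left.
- by move=> a b ha hb; case: leP.
- by move=> i _; right; exists i.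
Qed.

Lemma grid_floor_in_cube y : in_cube y -> in_cube (grid_floor y).
Proof.
move=> hy j; have [y0 y1] := hy j; split.
  exact: bigmax_seq_ge0.
apply: le_lt_trans y1; apply: (big_ind (fun v => v <= y j)) => //.
by move=> a b ha hb; rewrite ge_max ha hb.
Qed.

Lemma grid_floor_le y : in_cube y -> vle (grid_floor y) y.
Proof.
move=> hy j; apply: (big_ind (fun v => v <= y j)) => //; first exact: (hy j).1.
by move=> a b ha hb; rewrite ge_max ha hb.
Qed.

(* Flooring keeps a point in S: the coordinate certifying x not< pts i survives. *)
Lemma grid_floor_record y : record_region pts y -> record_region pts (grid_floor y).
Proof.
move=> [hy hrec]; split; first exact: grid_floor_in_cube.
move=> i hlt; have [j hj] := not_sprec_witness (hrec i).
have : pts i j <= grid_floor y j by apply: le_bigmax_seq; rewrite ?mem_index_enum.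
by rewrite leNgt hlt.
Qed.

(* Number of pairs (i, j) with pts i j <= y j: the measure of the induction. *)
Definition below_count y := #|[set ij : 'I_rho * 'I_d | pts ij.1 ij.2 <= y ij.2]|.

Lemma below_count_mono y z : vle y z -> (below_count y <= below_count z)%N.
Proof.
move=> hyz; apply: subset_leq_card; apply/subsetP => ij.
by rewrite !inE => h; apply: le_trans h (hyz _).
Qed.

(* On the grid, a strict descent loses the pair realizing the dropped coordinate. *)
Lemma below_count_strict y z : on_grid z -> in_cube y -> vle y z ->
  (exists j, y j < z j) -> (below_count y < below_count z)%N.
Proof.
move=> hz hy hyz [j hj]; apply: proper_card; apply/properP; split.
  by apply/subsetP => ij; rewrite !inE => h; apply: le_trans h (hyz _).
case: (hz j) => [z0|[i zi]].
  by move: hj; rewrite z0 ltNge (hy j).1.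
by exists (i, j); rewrite !inE /= -zi ?lexx // -ltNge.
Qed.

Lemma generator_below y : record_region pts y ->
  exists2 g, generators pts g & vle g y.
Proof.
move: {2}(below_count y) (erefl (below_count y)) => n.
elim/ltn_ind: n y => n IH y hn hy.
have hfS := grid_floor_record hy; have hfy := grid_floor_le hy.1.
case: (classic (generators pts (grid_floor y))) => hgen; first by exists (grid_floor y).
have [z [hzS hzf] hlt] := not_minimal_witness hfS hgen.
have hcount : (below_count z < n)%N.
  rewrite -hn; apply: leq_trans (below_count_mono hfy).
  exact: below_count_strict (grid_floor_on_grid y) hzS.1 hzf hlt.
have [g hg hgz] := IH _ hcount z erefl hzS.
by exists g => //; apply: vle_trans hgz (vle_trans hzf hfy).
Qed.

(* A generator equals its own floor, hence lies on the grid. *)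
Lemma generator_on_grid g : generators pts g -> on_grid g.
Proof.
move=> [hgS hmin]; rewrite -(hmin _ (grid_floor_record hgS) (grid_floor_le hgS.1)).
exact: grid_floor_on_grid.
Qed.

End GeneratorsBelow.

Section Truncation.
Variables (R : realFieldType) (d rho : nat) (pts : 'I_rho -> vec R d) (r : vec R d).
Hypothesis r_open : in_open_cube r.
Hypothesis r_off_grid : forall (j : 'I_d) i, r j != pts i j.
Implicit Types x y z g : vec R d.

Definition trunc_region x := record_region pts x /\ ~ Ominus r x.
Definition gens_out g := generators pts g /\ ~ sprec g r.
Definition gens_in g := generators pts g /\ sprec g r.

Definition raise y k := vjoin y (scaled_basis (r k) k).
Definition raised z := exists y k, gens_in y /\ z = raise y k.

Lemma trunc_regionE x : in_cube x -> (~ Ominus r x <-> ~ sprec x r).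
Proof. by move=> hx; split=> [hO hlt|hlt [_ ?]]; [apply: hO | apply: hlt]. Qed.

Lemma raise_at y k : sprec y r -> raise y k k = r k.
Proof. by move=> hy; rewrite /raise /vjoin /scaled_basis eqxx max_r // ltW. Qed.

Lemma raise_off y k j : in_cube y -> j != k -> raise y k j = y j.
Proof. by move=> hy hjk; rewrite /raise /vjoin /scaled_basis (negbTE hjk) max_l // (hy j).1. Qed.

Lemma le_raise y k : in_cube y -> sprec y r -> vle y (raise y k).
Proof.
move=> hc hy j; case: (eqVneq j k) => [->|hjk]; last by rewrite raise_off.
by rewrite raise_at // ltW.
Qed.

Lemma raise_le y x k : in_cube x -> vle y x -> r k <= x k -> vle (raise y k) x.
Proof.
move=> hx hyx hk j; rewrite /raise /vjoin /scaled_basis ge_max hyx /=.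
by case: (eqVneq j k) => [->|_] //; exact: (hx j).1.
Qed.

Lemma below_raise_coord g z k m : in_cube g -> sprec g r ->
  vle z (raise g k) -> r m <= z m -> m = k.
Proof.
move=> hg hgr hz hm; apply/eqP; apply: contraT => hmk.
move: (hz m); rewrite raise_off // => hzm.
by move: (lt_le_trans (le_lt_trans hzm (hgr m)) hm); rewrite ltxx.
Qed.

Lemma raise_in_trunc g k : gens_in g -> trunc_region (raise g k).
Proof.
move=> [[[hgc hgS] _] hgr].
have hc : in_cube (raise g k).
  move=> j; case: (eqVneq j k) => [->|hjk]; last by rewrite raise_off.
  by rewrite raise_at //; have [? ?] := r_open k; split=> //; exact: ltW.
split; first by apply: record_region_up (le_raise k hgc hgr) hc; split.
by apply/trunc_regionE => // hlt; move: (hlt k); rewrite raise_at // ltxx.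
Qed.

(* A generator below a raising of a point below r is itself below r: otherwise
   its coordinate k would equal r k, which is neither 0 nor a point coordinate. *)
Lemma gen_below_raise_in g h k : in_cube g -> sprec g r -> generators pts h ->
  vle h (raise g k) -> sprec h r.
Proof.
move=> hg hgr hG hle; apply: NNPP => /not_sprec_witness [m hm].
have emk := below_raise_coord hg hgr hle hm; subst m.
have hk : h k = r k by apply: le_anti; rewrite hm andbT -(raise_at k hgr) hle.
case: (generator_on_grid hG k) => [h0|[i hi]].
  by move: (r_open k).1; rewrite -hk h0 ltxx.
by move: (r_off_grid k i); rewrite -hk hi eqxx.
Qed.

(* Sigma and N' are disjoint: a raised point strictly dominates the generator
   it comes from, so it cannot itself be a generator. *)
Lemma gens_out_raised_disjoint x : ~ (gens_out x /\ minimal raised x).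
Proof.
move=> [[[hxS hxmin] _] [[y [k [[[hyS _] hyr] ex]]] _]]; subst x.
have e := hxmin y hyS (le_raise k hyS.1 hyr).
by move: (hyr k); rewrite {1}e raise_at // ltxx.
Qed.

Lemma gens_out_minimal x : gens_out x -> minimal trunc_region x.
Proof.
move=> [[hxS hxmin] hxr]; split; first by split=> //; apply/trunc_regionE; first exact: hxS.1.
by move=> y [hyS _]; exact: hxmin.
Qed.

(* Minimal raised points are minimal in S': anything of S' below x dominates a
   raised point, which by minimality of x in N' is x itself. *)
Lemma raised_minimal x : minimal raised x -> minimal trunc_region x.
Proof.
move=> [[g [k [hg ->]]] hmin]; split; first exact: raise_in_trunc.
move=> y [hyS /(trunc_regionE hyS.1) /not_sprec_witness [m hm]] hyx.
have [hgc hgr] := (hg.1.1.1, hg.2).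
have emk := below_raise_coord hgc hgr hyx hm; subst m.
have [h hG hhy] := generator_below hyS.
have hhr := gen_below_raise_in hgc hgr hG (vle_trans hhy hyx).
have hry := raise_le hyS.1 hhy hm.
have e := hmin _ (ex_intro _ h (ex_intro _ k (conj (conj hG hhr) erefl))) (vle_trans hry hyx).
by apply: vle_anti hyx _; rewrite -e.
Qed.

(* A minimal point of S' dominates a generator g; either g is not below r and
   then equals x, or x is the raising of g along a coordinate where x >= r. *)
Lemma minimal_trunc_cases x : minimal trunc_region x -> gens_out x \/ minimal raised x.
Proof.
move=> [[hxS hxO] hxmin]; have [g hg hgx] := generator_below hxS.
case: (classic (sprec g r)) => hgr; last first.
  left; have e := hxmin g (conj hg.1 ((trunc_regionE hg.1.1).2 hgr)) hgx.
  by rewrite -e; split.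
have [k hk] := not_sprec_witness ((trunc_regionE hxS.1).1 hxO).
have hgin : gens_in g by [].
have e := hxmin _ (raise_in_trunc k hgin) (raise_le hxS.1 hgx hk).
right; split; first by exists g, k; rewrite e.
by move=> w [h [m [hh ->]]]; exact: hxmin _ (raise_in_trunc m hh).
Qed.

End Truncation.

(* Only r in (0,1)^d and r avoiding the point coordinates are needed. *)
Theorem mainTheorem6 (R : realFieldType) (d rho : nat)
    (pts : 'I_rho -> vec R d) (r : vec R d) :
  (1 <= d)%N ->
  (forall i, in_open_cube (pts i)) ->
  (forall i i', i != i' -> ~ vle (pts i) (pts i')) ->
  (forall (j : 'I_d) i i', i != i' -> pts i j != pts i' j) ->
  record_region pts r ->
  in_open_cube r ->
  (forall (j : 'I_d) i, r j != pts i j) ->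
  let S' := fun x => record_region pts x /\ ~ Ominus r x in
  let Sigma := fun g => generators pts g /\ ~ sprec g r in
  let N := fun g => generators pts g /\ sprec g r in
  let Nhat := fun z => exists y k, N y /\ z = vjoin y (scaled_basis (r k) k) in
  let N' := minimal Nhat in
  (forall x, ~ (Sigma x /\ N' x)) /\
  (forall x, minimal S' x <-> (Sigma x \/ N' x)).
Proof.
move=> _ _ _ _ _ r_open r_off_grid S' Sigma N Nhat N'.
split; first exact: gens_out_raised_disjoint.
move=> x; split; first exact: minimal_trunc_cases.
case=> [hx|hx]; first exact: gens_out_minimal.
exact: raised_minimal r_open r_off_grid x hx.
Qed.
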